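(* Let $\vartheta:=\frac{1}{\sqrt2}\sup_{f\in U_1}A(H(\mathfrak{g}_f))$. Then $\vartheta\ge0.090435$.
   Context: $U_1$ is the set of absolutely continuous $f:[0,1]\to\mathbb{R}$ with $f(0)=0$ and $\int_0^1f'(s)^2ds\le1$. $\mathfrak{g}_f(0):=0$ and $\mathfrak{g}_f(t):=\frac1t\int_0^tf(s)\,ds$ for $0<t\le1$. $H(g):=\operatorname{hull}\{(t,g(t)):0\le t\le1\}\subset\mathbb{R}^2$, and $A$ denotes planar area. (This $\vartheta$ is the constant such that, for a planar random walk with i.i.d. increments of finite second moment, identity covariance and non-zero drift $\mu$, the convex hull $\mathcal G_n$ of its centre-of-mass process $G_n=\frac1n\sum_{i=1}^nS_i$ satisfies $\limsup_n A(\mathcal G_n)/(n^{3/2}\sqrt{\log\log n})=\vartheta\|\mu\|$ a.s.) *)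

From HB Require Import structures.
From mathcomp Require Import all_boot all_order all_algebra.
From mathcomp Require Import all_classical all_reals all_analysis.
Set Implicit Arguments. Unset Strict Implicit. Unset Printing Implicit Defensive.
Import Order.TTheory GRing.Theory Num.Theory.
Import numFieldNormedType.Exports.
Local Open Scope classical_set_scope.
Local Open Scope ring_scope.

Section Defs.
Variable R : realType.

Definition abs_continuous01 (f : R -> R) : Prop :=
  forall eps : R, 0 < eps -> exists2 delta : R, 0 < delta &
    forall (n : nat) (a b : nat -> R),
      (forall i, (i < n)%N -> 0 <= a i /\ a i <= b i /\ b i <= 1) ->
      (forall i j, (i < j)%N -> (j < n)%N -> b i <= a j) ->
      \sum_(i < n) (b i - a i) < delta ->
      \sum_(i < n) `|f (b i) - f (a i)| < eps.

(* U_1 : absolutely continuous f on [0,1], f 0 = 0, int_0^1 f'(s)^2 ds <= 1.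
   f' is the (a.e. defined) derivative, here MathComp's derive1. *)
Definition U1 : set (R -> R) :=
  [set f | [/\ abs_continuous01 f, f 0 = 0 &
     (\int[@lebesgue_measure R]_(s in `[0%R, 1%R]) ((derive1 f s) ^+ 2)%:E <= 1)%E]].

Definition gmean (f : R -> R) (t : R) : R :=
  if t == 0 then 0
  else t^-1 * Rintegral (@lebesgue_measure R) `[0, t] f.

Definition convex2 (C : set (R * R)) : Prop :=
  forall x y : R * R, C x -> C y -> forall l : R, 0 <= l -> l <= 1 ->
    C (l * x.1 + (1 - l) * y.1, l * x.2 + (1 - l) * y.2).

Definition hull2 (S : set (R * R)) : set (R * R) :=
  [set z | forall C, convex2 C -> S `<=` C -> C z].

Definition Hg (g : R -> R) : set (R * R) :=
  hull2 [set (t, g t) | t in `[0, 1]].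

Definition area (A : set (R * R)) : \bar R :=
  ((@lebesgue_measure R) \x (@lebesgue_measure R)) A.

Definition vartheta : \bar R :=
  ((Num.sqrt (2 : R))^-1)%:E *
  ereal_sup [set area (Hg (gmean f)) | f in U1].

End Defs.

(* The polynomial f(s) = 3/10 (9 s - 19 s^2 + 10 s^3) lies in U_1, with
   int_0^1 f'^2 = 93/100, and its running mean
   g_f(t) = 3/10 (9/2 t - 19/3 t^2 + 5/2 t^3) lies above its chord on [0, 1].
   By convexity, every vertical section of H(g_f) at x in [0, 1] contains the
   segment from the chord to g_f(x), so the area of H(g_f) is at least
   int_0^1 (g_f - chord) = 31/240.  The sections need not be shown measurable:
   the integral of a nonnegative function is a supremum over the simple
   functions below it, hence monotone for arbitrary functions.  Finally
   1/sqrt 2 >= 101/143 and 101/143 * 31/240 > 0.090435. *)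

From HB Require Import structures.
From mathcomp Require Import all_boot all_order all_algebra.
From mathcomp Require Import all_classical all_reals all_analysis.
From mathcomp Require Import ring lra.
Set Implicit Arguments.
Unset Strict Implicit.
Unset Printing Implicit Defensive.

Import Order.TTheory GRing.Theory Num.Theory.
Import numFieldNormedType.Exports.
Local Open Scope classical_set_scope.
Local Open Scope ring_scope.

Section nonmeasurable_integral.
Context d (T : measurableType d) (R : realType) (mu : {measure set T -> \bar R}).

Lemma ge0_le_integralT_nonmeasurable (f g : T -> \bar R) :
  (forall x, 0 <= f x)%E -> (forall x, f x <= g x)%E ->
  (\int[mu]_x f x <= \int[mu]_x g x)%E.
Proof.
move=> f0 fg; have g0 x : (0 <= g x)%E := le_trans (f0 x) (fg x).
rewrite !ge0_integralTE //; apply: ereal_sup_le => _ [h hf <-].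
by exists h => //= x; exact: le_trans (hf x) (fg x).
Qed.

End nonmeasurable_integral.

Section real_analysis.
Variable R : realType.
Local Notation mu := (@lebesgue_measure R).

Lemma le_lebesgue_measure (A B : set R) : A `<=` B -> (mu A <= mu B)%E.
Proof. exact: (@le_mu_ext _ (ocitv_type R) R _ A B). Qed.

Lemma integral_itv_horner_deriv (p : {poly R}) (g : R -> R) (a b : R) :
  a < b -> g =1 horner p^`() ->
  (\int[mu]_(x in `[a, b]) (g x)%:E = (p.[b] - p.[a])%:E)%E.
Proof.
move=> ab /funext ->.
rewrite (@continuous_FTC2 _ _ (horner p)) //.
- by apply/continuous_subspaceT => x; exact: continuous_horner.
- split=> [x _| |].
  + exact: derivable_horner.
  + by apply: cvg_at_right_filter; exact: continuous_horner.
  + by apply: cvg_at_left_filter; exact: continuous_horner.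
- by move=> x _; rewrite -derive.derivE.
Qed.

Lemma gmean_horner (f : R -> R) (q : {poly R}) (t : R) :
  0 < t -> f =1 horner ('X * q)^`() -> gmean f t = q.[t].
Proof.
move=> t0 fq; rewrite /gmean gt_eqF // /Rintegral.
rewrite (integral_itv_horner_deriv t0 fq) /= !hornerE subr0.
by rewrite mulKf ?gt_eqF.
Qed.

Lemma abs_continuous01_lipschitz (f : R -> R) (k : R) : 0 < k ->
  (forall u v, 0 <= u -> u <= v -> v <= 1 -> `|f v - f u| <= k * (v - u)) ->
  abs_continuous01 f.
Proof.
move=> k0 fk eps eps0; exists (eps / k); first by rewrite divr_gt0.
move=> n a b ab _ sum_lt.
apply: (@le_lt_trans _ _ (k * \sum_(i < n) (b i - a i))).
  rewrite mulr_sumr; apply: ler_sum => i _.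
  by have [a0 [ab' b1]] := ab i (ltn_ord i); exact: fk.
by rewrite -ltr_pdivlMl // mulrC.
Qed.

End real_analysis.

Section convex_hull.
Variable R : realType.
Local Notation mu := (@lebesgue_measure R).
Implicit Types (S C : set (R * R)) (g h : R -> R).

Lemma convex2_hull2 S : convex2 (hull2 S).
Proof.
move=> x y Sx Sy l l0 l1 C cC SC.
exact: cC (Sx C cC SC) (Sy C cC SC) l l0 l1.
Qed.

Lemma sub_hull2 S : S `<=` hull2 S.
Proof. by move=> z Sz C _; apply. Qed.

Lemma convex2_vsegment C x y1 y2 y : convex2 C ->
  C (x, y1) -> C (x, y2) -> y1 <= y <= y2 -> C (x, y).
Proof.
move=> cC C1 C2 /andP[y1y yy2].
have [y12|y12] := eqVneq y1 y2.
  by rewrite (@le_anti _ _ y y1) ?y12 ?yy2 // -y12.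
have d0 : y2 - y1 != 0 by rewrite subr_eq0 eq_sym.
pose l := (y - y1) / (y2 - y1).
have lt12 : y1 < y2 by rewrite lt_neqAle y12 (le_trans y1y yy2).
have l0 : 0 <= l by rewrite divr_ge0 // subr_ge0 // ltW.
have l1 : l <= 1 by rewrite ler_pdivrMr ?subr_gt0 // mul1r lerD2r.
have := cC _ _ C2 C1 l l0 l1 => /=.
have -> : l * x + (1 - l) * x = x by ring.
by have -> : l * y2 + (1 - l) * y1 = y by rewrite /l; field.
Qed.

Lemma eq_Hg g h : {in `[0, 1], g =1 h} -> Hg g = Hg h.
Proof.
move=> gh; rewrite /Hg; congr hull2.
by apply/seteqP; split=> _ [t t01 <-]; exists t; rewrite // gh.
Qed.

Definition chord g (x : R) := x * g 1 + (1 - x) * g 0.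

Lemma Hg_chord g x : 0 <= x <= 1 -> Hg g (x, chord g x).
Proof.
move=> /andP[x0 x1].
have graph_Hg t : 0 <= t <= 1 -> Hg g (t, g t).
  by move=> t01; apply: sub_hull2; exists t => //; rewrite /= in_itv.
have g1 : Hg g (1, g 1) by apply: graph_Hg; rewrite ler01 lexx.
have g0 : Hg g (0, g 0) by apply: graph_Hg; rewrite lexx ler01.
by have := convex2_hull2 g1 g0 x0 x1; rewrite /= mulr1 mulr0 addr0.
Qed.

Lemma xsection_Hg g x : 0 <= x <= 1 ->
  `[chord g x, g x] `<=` xsection (Hg g) x.
Proof.
move=> x01 y /=; rewrite in_itv /xsection /= inE => y_chord.
have graph_x : Hg g (x, g x).
  by apply: sub_hull2; exists x => //; rewrite /= in_itv.
have convex_Hg : convex2 (Hg g) by exact: convex2_hull2.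
exact: convex2_vsegment convex_Hg (Hg_chord x01) graph_x y_chord.
Qed.

Lemma area_Hg_ge g : (forall x, 0 <= x <= 1 -> chord g x <= g x) ->
  (\int[mu]_(x in `[0%R, 1%R]) (g x - chord g x)%:E <= area (Hg g))%E.
Proof.
move=> chord_le; rewrite integral_mkcond.
apply: ge0_le_integralT_nonmeasurable => x; rewrite /patch.
  case: ifPn => // /set_mem; rewrite /= in_itv /= => /chord_le.
  by rewrite lee_fin subr_ge0.
case: ifPn => [/set_mem x01|_]; last exact: measure_ge0.
rewrite /= in_itv /= in x01.
apply: le_trans (le_lebesgue_measure (xsection_Hg (g := g) x01)).
rewrite lebesgue_measure_itv /= lte_fin.
case: ifPn => [_|]; first by rewrite EFinB.
rewrite -leNgt => gx_le_chord.
by rewrite (@le_anti _ _ (g x) (chord g x)) ?gx_le_chord ?chord_le ?subrr.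
Qed.

End convex_hull.

Section witness.
Variable R : realType.

Definition witness : {poly R} :=
  (3 / 10) *: (9 *: 'X - 19 *: 'X^2 + 10 *: 'X^3).

Definition witness_mean : {poly R} :=
  (3 / 10) *: ((9 / 2) *: 'X - (19 / 3) *: 'X^2 + (5 / 2) *: 'X^3).

Definition witness_energy : {poly R} :=
  (9 / 100) *: (81 *: 'X - 342 *: 'X^2 + (1984 / 3) *: 'X^3
                - 570 *: 'X^4 + 180 *: 'X^5).

Definition witness_area : {poly R} :=
  (3 / 10) *: ((23 / 12) *: 'X^2 - (19 / 9) *: 'X^3 + (5 / 8) *: 'X^4).

(* Unlike [hornerE], this leaves powers in a form that [field] and [lra] parse. *)
Let hornerWE :=
  (hornerD, hornerN, hornerZ, hornerXn, hornerX, hornerC, hornerM, hornerMn).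

Lemma witness_lipschitz u v : 0 <= u -> u <= v -> v <= 1 ->
  `|witness.[v] - witness.[u]| <= 3 * (v - u).
Proof.
move=> u0 uv v1.
have -> : witness.[v] - witness.[u]
          = 3 / 10 * (9 - 19 * (u + v) + 10 * (u ^+ 2 + u * v + v ^+ 2)) * (v - u).
  by rewrite /witness !hornerWE; field.
have E_bound : `|9 - 19 * (u + v) + 10 * (u ^+ 2 + u * v + v ^+ 2)| <= 10.
  by rewrite ler_norml; apply/andP; split; nra.
rewrite normrM [`|v - u|]ger0_norm ?subr_ge0 //.
apply: ler_wpM2r; first by rewrite subr_ge0.
by rewrite normrM ger0_norm //; lra.
Qed.

Lemma witness_U1 : U1 (horner witness).
Proof.
split.
- exact: abs_continuous01_lipschitz (_ : 0 < 3) witness_lipschitz.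
- by rewrite /witness !hornerWE; ring.
- rewrite -derive.derivE (@integral_itv_horner_deriv _ witness_energy _ 0 1 ltr01).
    by rewrite lee_fin /witness_energy !hornerWE; lra.
  by move=> x; rewrite /witness /witness_energy !poly.derivE !hornerWE; field.
Qed.

Lemma gmean_witness : {in `[0, 1], gmean (horner witness) =1 horner witness_mean}.
Proof.
move=> t; rewrite in_itv /= => /andP[]; rewrite le_eqVlt => /predU1P[<- _|t_gt0 _].
  by rewrite /gmean eqxx /witness_mean !hornerWE; field.
apply: gmean_horner t_gt0 _ => x.
by rewrite /witness /witness_mean !poly.derivE !hornerWE; field.
Qed.

Lemma witness_mean_ge_chord x : 0 <= x <= 1 ->
  chord (horner witness_mean) x <= witness_mean.[x].
Proof.
move=> /andP[x0 x1]; rewrite -subr_ge0.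
have -> : witness_mean.[x] - chord (horner witness_mean) x
          = 3 / 4 * x * (1 - x) * (23 / 15 - x).
  by rewrite /chord /witness_mean !hornerWE; field.
by rewrite !mulr_ge0 //; lra.
Qed.

Lemma area_witness : ((31 / 240)%:E <= area (Hg (gmean (horner witness))))%E.
Proof.
rewrite (eq_Hg gmean_witness).
apply: le_trans (area_Hg_ge witness_mean_ge_chord).
rewrite (@integral_itv_horner_deriv _ witness_area _ 0 1 ltr01).
  by rewrite lee_fin /witness_area !hornerWE; lra.
move=> x; rewrite /chord /witness_area /witness_mean.
by rewrite !poly.derivE !hornerWE; field.
Qed.

Lemma inv_sqrt2_ge : 101 / 143 <= (Num.sqrt 2 : R)^-1.
Proof.
have sqrt2_le : Num.sqrt 2 <= 143 / 101 :> R.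
  rewrite -[143 / 101 : R]ger0_norm // -sqrtr_sqr ler_sqrt; lra.
by rewrite -[101 / 143 : R]invf_div lef_pV2 ?posrE ?sqrtr_gt0 //; lra.
Qed.

End witness.

Theorem propositionA1 (R : realType) :
  (((90435%:R / 1000000%:R : R))%:E <= vartheta R)%E.
Proof.
have witness_le_sup : (area (Hg (gmean (horner (witness R))))
    <= ereal_sup [set area (Hg (gmean f)) | f in U1 (R := R)])%E.
  by apply: ereal_sup_ubound; exists (horner (witness R)) => //; exact: witness_U1.
rewrite /vartheta.
apply: le_trans (lee_wpmul2l _ (le_trans (area_witness R) witness_le_sup)).
  by rewrite -EFinM lee_fin; have := inv_sqrt2_ge R; lra.
by rewrite lee_fin invr_ge0 sqrtr_ge0.
Qed.
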